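(* Let $t\ge 2$ and $k_1,\dots,k_t\ge 2$ be integers. If a finite simple graph $G$ contains an induced subgraph isomorphic to the vertex-disjoint union $P_{k_1}\cup P_{k_2}\cup\cdots\cup P_{k_t}$ of paths on $k_1,\dots,k_t$ vertices, then \[\mathrm{mur}(G)\ge \Big(\sum_{i=1}^t k_i\Big)-(t+1).\]
   Context: For a finite simple undirected graph $G$ on vertices $v_1,\dots,v_n$, let $A_G$ be its $(0,1)$-adjacency matrix, $D_G=\mathrm{diag}(d_1,\dots,d_n)$ with $d_i$ the degree of $v_i$, $I$ the $n\times n$ identity matrix and $J$ the $n\times n$ all-ones matrix. A universal adjacency matrix of $G$ is any matrix $\alpha A_G+\beta I+\gamma J+\delta D_G$ with real scalars $\alpha,\beta,\gamma,\delta$ and $\alpha\neq 0$. The minimum universal rank $\mathrm{mur}(G)$ is the minimum rank over all universal adjacency matrices of $G$. *)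

From HB Require Import structures.
From mathcomp Require Import all_boot all_order all_algebra.
From mathcomp Require Import boolp reals.
Set Implicit Arguments. Unset Strict Implicit. Unset Printing Implicit Defensive.
Import Order.TTheory GRing.Theory Num.Theory.
Local Open Scope ring_scope.

Definition simple_graph (n : nat) (e : rel 'I_n) : Prop :=
  symmetric e /\ irreflexive e.

Section Matrices.
Variables (R : realType) (n : nat) (e : rel 'I_n).

Definition adjmx : 'M[R]_n := \matrix_(i, j) (e i j)%:R.
Definition degree (i : 'I_n) : nat := #|[set j | e i j]|.
Definition degmx : 'M[R]_n := diag_mx (\row_i (degree i)%:R).
Definition allones : 'M[R]_n := const_mx 1.

Definition univ_adj (a b c d : R) : 'M[R]_n :=
  a *: adjmx + b%:M + c *: allones + d *: degmx.

Definition is_univ_rank (r : nat) : Prop :=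
  exists a b c d : R, a != 0 /\ \rank (univ_adj a b c d) = r.

Lemma is_univ_rank_ex : exists r, `[< is_univ_rank r >].
Proof.
exists (\rank (univ_adj 1 0 0 0)); apply/asboolP.
by exists 1, 0, 0, 0; split => //; exact: oner_neq0.
Qed.

Definition mur : nat := ex_minn is_univ_rank_ex.
End Matrices.

Definition paths_vert (t : nat) (k : 'I_t -> nat) := {i : 'I_t & 'I_(k i)}.

Definition paths_adj (t : nat) (k : 'I_t -> nat) (x y : paths_vert k) : bool :=
  (tag x == tag y) &&
  (((tagged x : nat).+1 == tagged y :> nat) || ((tagged y : nat).+1 == tagged x :> nat)).

Definition has_induced_paths (n : nat) (e : rel 'I_n) (t : nat) (k : 'I_t -> nat) : Prop :=
  exists f : paths_vert k -> 'I_n,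
    injective f /\ forall x y, e (f x) (f y) = paths_adj x y.

From HB Require Import structures.
From mathcomp Require Import all_boot all_order all_algebra.
From mathcomp Require Import boolp reals.
From mathcomp Require Import zify ring.
Set Implicit Arguments. Unset Strict Implicit. Unset Printing Implicit Defensive.
Import Order.TTheory GRing.Theory Num.Theory.
Local Open Scope ring_scope.

(* Drop the multiple of J, which costs at most one unit of rank.  In
   alpha A + beta I + delta D, index the rows by the first vertices and the
   columns by the second vertices of the edges of the induced paths, listing
   the edges path by path.  An earlier edge's first vertex is never equal or
   adjacent to a later edge's second vertex, so this square submatrix is
   triangular with alpha on its diagonal: its size sum (k_i - 1) is a lower
   bound for the rank. *)

Section RankLemmas.
Variable F : fieldType.

Lemma mxrank_rowsub m m' n (f : 'I_m' -> 'I_m) (A : 'M[F]_(m, n)) :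
  (\rank (rowsub f A) <= \rank A)%N.
Proof. by rewrite rowsubE mxrankM_maxr. Qed.

Lemma mxrank_mxsub m m' n n' (f : 'I_m' -> 'I_m) (g : 'I_n' -> 'I_n)
    (A : 'M[F]_(m, n)) :
  (\rank (mxsub f g A) <= \rank A)%N.
Proof.
rewrite mxsubrc (leq_trans (mxrank_rowsub _ _)) //.
by rewrite -mxrank_tr trmx_mxsub -(mxrank_tr A) mxrank_rowsub.
Qed.

Lemma mxrank_const_mx_le1 m n (a : F) : (\rank (const_mx a : 'M_(m, n)) <= 1)%N.
Proof.
have -> : const_mx a = (const_mx a : 'M[F]_(m, 1)) *m (const_mx 1 : 'M_(1, n)).
  by apply/matrixP => i j; rewrite !mxE big_ord1 !mxE mulr1.
exact: leq_trans (mxrankM_maxl _ _) (rank_leq_col _).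
Qed.

Lemma mxrank_trig_diag_neq0 m (A : 'M[F]_m) :
  is_trig_mx A -> (forall i, A i i != 0) -> \rank A = m.
Proof.
move=> trigA diagA; apply: mxrank_unit.
by rewrite unitmxE det_trig // unitfE; apply/prodf_neq0 => i _.
Qed.

End RankLemmas.

Section UniversalAdjacency.
Variables (R : realType) (n : nat) (e : rel 'I_n).

Lemma univ_adj_offdiag (a b c d : R) (x y : 'I_n) :
  x != y -> univ_adj e a b c d x y = a *+ e x y + c.
Proof. by move=> /negPf xy; rewrite !mxE xy !mulr0n mulr0 mulr1 !addr0 mulr_natr. Qed.

Lemma univ_adj_shiftJ (a b c c' d : R) :
  univ_adj e a b c d = univ_adj e a b c' d + const_mx (c - c').
Proof. by apply/matrixP => i j; rewrite !mxE; ring. Qed.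

Lemma mxrank_univ_adj_shiftJ (a b c c' d : R) :
  (\rank (univ_adj e a b c' d) <= \rank (univ_adj e a b c d) + 1)%N.
Proof.
rewrite (univ_adj_shiftJ a b c' c d).
by apply: leq_trans (mxrank_add _ _) _; rewrite leq_add2l mxrank_const_mx_le1.
Qed.

End UniversalAdjacency.

Section PathEdges.
Variables (t : nat) (k : 'I_t -> nat).

Local Notation edge := 'I_(\sum_(i < t) (k i - 1)).

(* The edges of P_{k_1} u ... u P_{k_t}, listed path by path: edge [l] joins
   the vertices [pos_of l] and [pos_of l + 1] of path [path_of l]. *)
Let path_of (l : edge) : 'I_t := tagnat.sig1 l.
Let pos_of (l : edge) : nat := tagnat.sig2 l.

Lemma succ_pos_of_lt (l : edge) : ((pos_of l).+1 < k (path_of l))%N.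
Proof. have := ltn_ord (tagnat.sig2 l); rewrite /pos_of /path_of; lia. Qed.

Definition edge_tail (l : edge) : paths_vert k :=
  Tagged (fun i => 'I_(k i)) (Ordinal (ltnW (succ_pos_of_lt l))).
Definition edge_head (l : edge) : paths_vert k :=
  Tagged (fun i => 'I_(k i)) (Ordinal (succ_pos_of_lt l)).

Lemma pos_of_lt_same_path (l l' : edge) :
  path_of l = path_of l' -> (l < l')%N -> (pos_of l < pos_of l')%N.
Proof.
move=> samel.
have rank_l : l = (\sum_(i < t | (i < path_of l)%N) (k i - 1) + pos_of l)%N :> nat
  := tagnat.rect l.
have rank_l' : l' = (\sum_(i < t | (i < path_of l')%N) (k i - 1) + pos_of l')%N :> nat
  := tagnat.rect l'.
rewrite samel in rank_l; lia.
Qed.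

Lemma edge_tail_neq_head (l l' : edge) : (l <= l')%N -> edge_tail l != edge_head l'.
Proof.
move=> le_ll'; apply/eqP => tail_head.
have samel : path_of l = path_of l' := congr1 tag tail_head.
have := congr1 (fun v : paths_vert k => nat_of_ord (tagged v)) tail_head => /=.
rewrite leq_eqVlt in le_ll'; case/orP: le_ll' => [/eqP/val_inj <-|]; first lia.
by move=> /(pos_of_lt_same_path samel); lia.
Qed.

Lemma paths_adj_edge (l : edge) : paths_adj (edge_tail l) (edge_head l).
Proof. by rewrite /paths_adj !eqxx. Qed.

Lemma paths_adj_edge_lt (l l' : edge) :
  (l < l')%N -> ~~ paths_adj (edge_tail l) (edge_head l').
Proof.
rewrite /paths_adj /=; case: eqP => //= samel /(pos_of_lt_same_path samel).
lia.
Qed.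

End PathEdges.

Theorem lemma8 (R : realType) (n : nat) (e : rel 'I_n) (t : nat) (k : 'I_t -> nat) :
  simple_graph e -> (2 <= t)%N -> (forall i, (2 <= k i)%N) ->
  has_induced_paths e k ->
  ((\sum_(i < t) k i) - t.+1 <= mur R e)%N.
Proof.
move=> _ _ _ [f [finj fe]].
rewrite /mur; case: ex_minnP => r /asboolP [a [b [c [d [a0 <-]]]]] _.
pose S := mxsub (f \o edge_tail (k:=k)) (f \o edge_head (k:=k)) (univ_adj e a b 0 d).
have S_upper (l l' : 'I_(\sum_(i < t) (k i - 1))) :
    (l <= l')%N -> S l l' = a *+ paths_adj (edge_tail l) (edge_head l').
  move=> le_ll'; rewrite mxE /= univ_adj_offdiag ?fe ?addr0 //.
  by rewrite (inj_eq finj) edge_tail_neq_head.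
have rankS : \rank S = (\sum_(i < t) (k i - 1))%N.
  apply: mxrank_trig_diag_neq0 => [|l]; last by rewrite S_upper // paths_adj_edge.
  apply/is_trig_mxP => l l' lt_ll'.
  by rewrite (S_upper _ _ (ltnW lt_ll')) (negPf (paths_adj_edge_lt lt_ll')).
have : (\rank S <= \rank (univ_adj e a b c d) + 1)%N.
  exact: leq_trans (mxrank_mxsub _ _ _) (mxrank_univ_adj_shiftJ e a b c 0 d).
rewrite rankS.
have : (\sum_(i < t) k i <= \sum_(i < t) (k i - 1) + t)%N.
  rewrite -[X in (_ <= _ + X)%N]card_ord -sum1_card -big_split /=.
  by apply: leq_sum => i _; lia.
lia.
Qed.
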